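(* Let $0<i_1<i_2<\cdots<i_L$ be integers and $\mathcal S=\{x_0,x_{i_1},\ldots,x_{i_L}\}$, with corresponding restricted right-arm rotation distance $d_{RRA}^{\mathcal S}$. Then for every integer $n>i_L+4$ there exist finite rooted binary trees $T_1,T_2$, each with $n$ nodes, such that $d_{RRA}^{\mathcal S}(T_1,T_2)$ is defined and $d_{RRA}^{\mathcal S}(T_1,T_2)\ge 4n-4i_L-4$.
   Context: Trees: finite rooted binary trees, each internal vertex (node) having a left and a right child. The right arm consists of the root and all nodes reachable from the root by a path of right edges; the level of a node is its distance from the root. Right rotation at a node $N$ whose left child $M$ is a node (with $A,B$ the subtrees of $M$, $C$ the right subtree of $N$) replaces the subtree at $N$ by one whose root has left subtree $A$ and right child a node with left subtree $B$ and right subtree $C$; left rotation at $N$ is the inverse. Rotations preserve the number of nodes. $d_{RRA}^{\mathcal S}(T_1,T_2)$ is the minimal number of rotations, each at a right-arm node at one of the levels $0,i_1,\ldots,i_L$, required to transform $T_1$ into $T_2$; it is defined when such a sequence exists. *)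

From mathcomp Require Import all_boot.
Set Implicit Arguments. Unset Strict Implicit. Unset Printing Implicit Defensive.

(* Finite rooted binary trees: a leaf (empty subtree) or an internal node
   (vertex) with a left and a right subtree. *)
Inductive tree : Type := Leaf | Node of tree & tree.

Fixpoint nodes (t : tree) : nat :=
  if t is Node l r then (nodes l + nodes r).+1 else 0.

Definition rotR (t : tree) : option tree :=
  match t with
  | Node (Node a b) c => Some (Node a (Node b c))
  | _ => None
  end.

Definition rotL (t : tree) : option tree :=
  match t with
  | Node a (Node b c) => Some (Node (Node a b) c)
  | _ => None
  end.

(* Apply a local operation f at the right-arm node at level k
   (reached from the root by k right edges); None if no such node
   or if f fails there. *)
Fixpoint at_arm (k : nat) (f : tree -> option tree) (t : tree) : option tree :=
  match k, t with
  | 0, Node _ _ => f t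
  | k'.+1, Node l r =>
      match at_arm k' f r with Some r' => Some (Node l r') | None => None end
  | _, Leaf => None
  end.

Definition rra_step (levels : seq nat) (t1 t2 : tree) : Prop :=
  exists2 k, k \in levels &
    (at_arm k rotR t1 = Some t2 \/ at_arm k rotL t1 = Some t2).

Fixpoint rra_reach (levels : seq nat) (m : nat) (t1 t2 : tree) : Prop :=
  match m with
  | 0 => t1 = t2
  | m'.+1 => exists t, rra_step levels t1 t /\ rra_reach levels m' t t2
  end.

Definition rra_defined (levels : seq nat) (t1 t2 : tree) : Prop :=
  exists m, rra_reach levels m t1 t2.

Definition rra_dist_ge (levels : seq nat) (t1 t2 : tree) (d : nat) : Prop :=
  rra_defined levels t1 t2 /\ forall m, rra_reach levels m t1 t2 -> d <= m.

From mathcomp Require Import all_boot zify.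
Set Implicit Arguments. Unset Strict Implicit. Unset Printing Implicit Defensive.

(* Label the nodes in in-order, 1..n: rotations preserve the labels and their order.
   Both trees below have right arm [n], and a rotation moves at most one label onto or
   off the arm, so a rotation sequence is at least as long as the total number of arm
   entries and exits of the labels 1..n-1, each of which is off the arm at both ends.
   Every label visits the arm: a label x <= c = i_1 - 1 because levels 1..c are not
   available and the root rotations must first bring all of 1..c+1 onto the arm, a label
   x > c because it is an ancestor of n-2 at the start and of n-1 at the end, and a node
   gains or loses descendants only while it is on the arm.  When n-1 leaves the arm for
   the last time, by a rotation at some allowed level k <= i_L, the arm consists of at
   most k+1 labels below n, including n-2 and n-1; every label x > c missing from it must
   lose n-2 as a descendant before and gain n-1 after, hence visit the arm twice.  This
   gives at least 2(n-1) + 2(n-1-c-(k+1)) >= 4n - 4 i_L - 4 rotations.  The two trees are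
   connected through the right path, a rotation at level i_1 + 1 being simulated by
   rotations at levels 0 and i_1. *)

Inductive ltree := LLeaf | LNode of ltree & nat & ltree.

Fixpoint keys u := if u is LNode l x r then keys l ++ x :: keys r else [::].
Fixpoint arm u := if u is LNode _ x r then x :: arm r else [::].
Fixpoint anc u p d : bool :=
  if u is LNode l x r then
    [|| (x == p) && (d \in keys l ++ keys r), anc l p d | anc r p d]
  else false.

Lemma anc_nodeL l x r p d : anc l p d -> anc (LNode l x r) p d.
Proof. by move=> /= ->; rewrite orbT. Qed.

Lemma anc_nodeR l x r p d : anc r p d -> anc (LNode l x r) p d.
Proof. by move=> /= ->; rewrite !orbT. Qed.

Lemma anc_node_root l x r d : d \in keys l ++ keys r -> anc (LNode l x r) x d.
Proof. by move=> /= ->; rewrite eqxx. Qed.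

Lemma arm_keys u : {subset arm u <= keys u}.
Proof.
elim: u => [|l _ x r IH] y //=; rewrite in_cons mem_cat in_cons.
by case/orP=> [->|/IH ->]; rewrite ?orbT.
Qed.

Lemma anc_keys u p d : anc u p d -> (p \in keys u) && (d \in keys u).
Proof.
elim: u => [|l IHl x r IHr] //=; rewrite !mem_cat !in_cons.
case/or3P=> [/andP[/eqP-> /orP[]->]|/IHl/andP[->->]|/IHr/andP[->->]];
  by rewrite ?eqxx ?orbT.
Qed.

Lemma anc_arm u p d : uniq (keys u) -> d \in arm u -> anc u p d -> p \in arm u.
Proof.
elim: u => [|l _ x r IHr] //=; rewrite cat_uniq /= => /and3P[_ /norP[xl lr] /andP[xr ur]].
rewrite !in_cons => /predU1P[->|dr]
  /or3P[/andP[/eqP-> _]|/anc_keys/andP[_ dl]|ancr]; rewrite ?eqxx //.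
- by rewrite dl in xl.
- by move/anc_keys: ancr => /andP[_ xr']; rewrite xr' in xr.
- by move/hasPn: lr => /(_ d (arm_keys dr)); rewrite dl.
- by rewrite (IHr ur dr ancr) orbT.
Qed.

Fixpoint label t o :=
  if t is Node l r then LNode (label l o) (o + nodes l) (label r (o + nodes l).+1)
  else LLeaf.

Lemma keys_label t o : keys (label t o) = iota o (nodes t).
Proof.
elim: t o => [|l IHl r IHr] o //.
by rewrite [LHS]/= IHl IHr -[nodes (Node l r)]/(nodes l + nodes r).+1 -(addnS (nodes l)) iotaD.
Qed.

Inductive lrot : ltree -> ltree -> Prop :=
  LRot A x B y C : lrot (LNode (LNode A x B) y C) (LNode A x (LNode B y C)).

Lemma anc_rotR A x B y C p d : p != y ->
  anc (LNode (LNode A x B) y C) p d -> anc (LNode A x (LNode B y C)) p d.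
Proof.
move=> /negbTE py /=; rewrite eq_sym py !mem_cat !in_cons /=.
by case/orP=> [/or3P[/andP[-> /orP[]->]|->|->]|->]; rewrite ?orbT.
Qed.

Lemma anc_rotL A x B y C p d : p != x ->
  anc (LNode A x (LNode B y C)) p d -> anc (LNode (LNode A x B) y C) p d.
Proof.
move=> /negbTE px /=; rewrite eq_sym px !mem_cat !in_cons /=.
by case/or4P=> [->|/andP[-> /orP[]->]|->|->]; rewrite ?orbT.
Qed.

(* A context lists, from the root down, the left subtree and label of the right-arm
   nodes above a hole. *)
Definition lctx := seq (ltree * nat).
Definition plug (c : lctx) s := foldr (fun lx u => LNode lx.1 lx.2 u) s c.
Definition ctx_keys (c : lctx) := flatten [seq keys lx.1 ++ [:: lx.2] | lx <- c].

Lemma keys_plug c s : keys (plug c s) = ctx_keys c ++ keys s.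
Proof. by elim: c => [|[l x] c IH] //=; rewrite IH -!catA. Qed.

Lemma arm_plug c s : arm (plug c s) = map snd c ++ arm s.
Proof. by elim: c => [|[l x] c IH] //=; rewrite IH. Qed.

Lemma anc_plug c s p d : anc s p d -> anc (plug c s) p d.
Proof. by elim: c => [|[l x] c IH] //= /IH ->; rewrite !orbT. Qed.

Lemma anc_plug_sub c s s' p d : keys s' = keys s -> (anc s p d -> anc s' p d) ->
  anc (plug c s) p d -> anc (plug c s') p d.
Proof.
move=> eks ss'; elim: c => [|[l x] c IH] //=; rewrite !keys_plug eks.
by case/or3P=> [->|->|/IH->]; rewrite ?orbT.
Qed.

Lemma mem_last_ctx_keys (c : lctx) x0 :
  0 < size (ctx_keys c) -> last x0 (ctx_keys c) \in map snd c.
Proof.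
case/lastP: c => [|c [l x]] // _.
rewrite /ctx_keys map_rcons flatten_rcons last_cat /= last_cat /=.
by rewrite map_rcons mem_rcons mem_head.
Qed.

Definition lstep k u u' := exists c s s',
  [/\ size c = k, u = plug c s, u' = plug c s' & lrot s s' \/ lrot s' s].

Lemma lstep_sym k u u' : lstep k u u' -> lstep k u' u.
Proof. by case=> c [s [s' [? -> -> rot]]]; exists c, s', s; split; tauto. Qed.

Lemma lrot_keys s s' : lrot s s' -> keys s' = keys s.
Proof. by case=> A x B y C /=; rewrite -!catA. Qed.

Lemma lstep_keys k u u' : lstep k u u' -> keys u' = keys u.
Proof.
case=> c [s [s' [_ -> -> rot]]]; rewrite !keys_plug.
by case: rot => /lrot_keys ->.
Qed.

Lemma lstep_arm k u u' : lstep k u u' ->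
  exists x0, forall y, y != x0 -> (y \in arm u') = (y \in arm u).
Proof.
case=> c [s [s' [_ -> -> [] [A x B y C]]]]; exists x => z /negbTE zx;
  by rewrite !arm_plug /= !mem_cat !in_cons zx.
Qed.

Lemma lstep_anc_lost k u u' p d : lstep k u u' -> anc u p d -> ~~ anc u' p d -> p \in arm u.
Proof.
have armc c A x B := arm_plug c (LNode A x B).
case=> c [s [s' [_ -> -> [] rot]]]; have eks := lrot_keys rot; case: rot eks => A x B y C eks.
- case: (eqVneq p y) => [->|py]; first by rewrite armc mem_cat mem_head orbT.
  by move=> /(anc_plug_sub eks (anc_rotR py)) ->.
- case: (eqVneq p x) => [->|px]; first by rewrite armc mem_cat mem_head orbT.
  by move=> /(anc_plug_sub (esym eks) (anc_rotL px)) ->.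
Qed.

Lemma lstep_anc_gained k u u' p d : lstep k u u' -> ~~ anc u p d -> anc u' p d -> p \in arm u'.
Proof. by move=> /lstep_sym st h h'; apply: lstep_anc_lost st h' h. Qed.

Lemma lstep_arm_exit k u u' z : lstep k u u' -> z \in arm u -> z \notin arm u' ->
  exists c A B y C, [/\ size c = k, u = plug c (LNode A z (LNode B y C)) &
     u' = plug c (LNode (LNode A z B) y C)].
Proof.
case=> c [s [s' [sk -> -> [] [A x B y C]]]]; rewrite !arm_plug /= !mem_cat !in_cons.
- by case/or3P=> ->; rewrite ?orbT.
- case: (eqVneq z x) => [->|_]; first by exists c, A, B, y, C.
  by move=> ->.
Qed.

Lemma lstep_node k l x u u' : lstep k u u' -> lstep k.+1 (LNode l x u) (LNode l x u').
Proof. by case=> c [s [s' [<- -> -> rot]]]; exists ((l, x) :: c), s, s'. Qed.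

Lemma rotR_rotL t t' : rotR t = Some t' <-> rotL t' = Some t.
Proof.
split; first by case: t => [|[|a b] c] //= [<-].
by case: t' => [|a [|b c]] //= [<-].
Qed.

Lemma at_arm_rotR_rotL k t t' : at_arm k rotR t = Some t' <-> at_arm k rotL t' = Some t.
Proof.
elim: k t t' => [|k IH] t t'.
  have arm0 g u : g Leaf = None -> at_arm 0 g u = g u by case: u.
  by rewrite !arm0 //; exact: rotR_rotL.
split.
- case: t => [|l r] //=; case e: (at_arm k rotR r) => [r'|] //= [<-] /=.
  by move/IH: e => ->.
- case: t' => [|l r] //=; case e: (at_arm k rotL r) => [r'|] //= [<-] /=.
  by move/IH: e => ->.
Qed.

Lemma lstep_label_rotR k t t' o : at_arm k rotR t = Some t' ->
  lstep k (label t o) (label t' o).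
Proof.
elim: k t t' o => [|k IH] [|l r] t' o //=.
  case: l => [|a b] //= [<-] /=.
  have -> : (o + nodes a).+1 + nodes b = o + (nodes a + nodes b).+1 by lia.
  by exists [::]; do 2!eexists; split => //; left; apply: LRot.
case e: (at_arm k rotR r) => [r'|] //= [<-] /=.
exact: lstep_node (IH _ _ _ e).
Qed.

Lemma rra_step_sym S t t' : rra_step S t t' -> rra_step S t' t.
Proof. by case=> k kS [] /at_arm_rotR_rotL h; exists k => //; [right | left]. Qed.

Lemma rra_step_lstep S t t' o : rra_step S t t' ->
  exists2 k, k \in S & lstep k (label t o) (label t' o).
Proof.
case=> k kS [h|/at_arm_rotR_rotL h]; exists k => //; first exact: lstep_label_rotR.
exact/lstep_sym/lstep_label_rotR.
Qed.

Lemma ex_last_before (P : pred nat) a c : a <= c -> P a -> ~~ P c ->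
  exists t, [/\ a <= t < c, P t & forall j, t < j <= c -> ~~ P j].
Proof.
move=> ac Pa Pc.
have exP : exists j, (a <= j <= c) && P j by exists a; rewrite leqnn ac Pa.
have ubP j : (a <= j <= c) && P j -> j <= c by case/andP=> /andP[].
case: (ex_maxnP exP ubP) => t /andP[a_t_c Pt] t_max.
have t_neq_c : t != c by apply: contraNneq Pc => <-.
exists t; split=> //; first by move: a_t_c t_neq_c => /andP[-> t_le_c]; rewrite ltn_neqAle => ->.
move=> j /andP[tj jc]; apply/negP => Pj.
have a_j : a <= j by case/andP: a_t_c => a_t _; exact: leq_trans a_t (ltnW tj).
by have := t_max j; rewrite a_j jc Pj leqNgt tj => /(_ isT).
Qed.

Lemma path_leq_bounds x s k : path leq x s -> k \in x :: s -> x <= k <= last x s.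
Proof.
elim: s x k => [|y s IH] x k /=; first by rewrite inE => _ /eqP->; rewrite leqnn.
case/andP=> xy ys; rewrite inE => /predU1P[->|/(IH y _ ys)/andP[yk ->]].
  by rewrite leqnn; case/andP: (IH y _ ys (mem_head _ _)) => _; apply: leq_trans.
by rewrite (leq_trans xy yk).
Qed.

Definition switches (b : nat -> bool) a c := \sum_(a <= j < c) (b j != b j.+1 : nat).

Lemma switches_cat b a c e : a <= c -> c <= e ->
  switches b a e = switches b a c + switches b c e.
Proof. by move=> ac ce; rewrite /switches (big_cat_nat ac ce). Qed.

Lemma switches_gt0 b a c : a <= c -> b a != b c -> 0 < switches b a c.
Proof.
elim: c => [|c IH]; first by rewrite leqn0 => /eqP->; rewrite eqxx.
rewrite leq_eqVlt => /orP[/eqP->|ac]; first by rewrite eqxx.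
rewrite /switches big_nat_recr //= -/(switches b a c).
case: (eqVneq (b a) (b c)) => [->|/(IH ac) pos]; last by rewrite addn_gt0 pos.
by move=> ->; rewrite addn1.
Qed.

Lemma switches_alternating b a ts : sorted leq (a :: ts) ->
  path (fun i j => b i != b j) a ts -> size ts <= switches b a (last a ts).
Proof.
elim: ts a => [|j ts IH] a //= /andP[aj ts_sorted] /andP[baj ts_alt].
have /andP[_ jl] := path_leq_bounds ts_sorted (mem_head j ts).
rewrite (switches_cat b aj jl) -add1n leq_add //; first exact: switches_gt0.
exact: IH.
Qed.

Lemma sum_switches_le (T : eqType) (b : T -> nat -> bool) (s : seq T) m : uniq s ->
  (forall j, j < m -> exists x0, forall x, x != x0 -> b x j.+1 = b x j) ->
  \sum_(x <- s) switches (b x) 0 m <= m.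
Proof.
move=> us hb; rewrite /switches exchange_big /=.
rewrite -[leqRHS]subn0 -[leqRHS]muln1 -sum_nat_const_nat big_nat_cond [leqRHS]big_nat_cond.
apply: leq_sum => j /andP[/andP[_ jm] _]; have [x0 hx0] := hb j jm.
apply: (@leq_trans (\sum_(x <- s) (x == x0))).
  by apply: leq_sum => x _; case: (eqVneq x x0) => [_|/hx0->]; rewrite ?eqxx ?leq_b1.
by rewrite -big_mkcondr /= sum1_count count_uniq_mem // leq_b1.
Qed.

Definition rpath_on k u := iter k (Node Leaf) u.
Definition lpath_on k u := iter k (Node^~ Leaf) u.
Notation rpath k := (rpath_on k Leaf).
Notation lpath k := (lpath_on k Leaf).

Lemma rpath_onSr k u : rpath_on k.+1 u = rpath_on k (Node Leaf u).
Proof. exact: iterSr. Qed.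

Lemma lpath_onSr k u : lpath_on k.+1 u = lpath_on k (Node u Leaf).
Proof. exact: iterSr. Qed.

Definition start_tree c n := Node (Node (Node (lpath c) (rpath (n - 3 - c))) Leaf) Leaf.
Definition end_tree c n := Node (Node (lpath c) (rpath (n - 2 - c))) Leaf.

Lemma nodes_rpath_on k u : nodes (rpath_on k u) = k + nodes u.
Proof. by elim: k => //= k ->. Qed.

Lemma nodes_lpath_on k u : nodes (lpath_on k u) = k + nodes u.
Proof. by elim: k => //= k ->; rewrite addn0. Qed.

Lemma label_rpathS k o : label (rpath k.+1) o = LNode LLeaf o (label (rpath k) o.+1).
Proof. by rewrite /= addn0. Qed.

Lemma anc_label_rpath k o x y : o <= x -> x < y -> y < o + k -> anc (label (rpath k) o) x y.
Proof.
elim: k o => [|k IH] o ox xy yk; first lia.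
rewrite label_rpathS /=; case: (eqVneq o x) => [<-|ox'].
  by rewrite keys_label nodes_rpath_on mem_iota; apply/orP; left; lia.
by rewrite IH ?orbT //; lia.
Qed.

Lemma anc_label_rpath_lt k o x y : anc (label (rpath k) o) x y -> x < y.
Proof.
elim: k o => [|k IH] o //; rewrite label_rpathS /=.
by case/orP=> [/andP[/eqP<-]|/IH] //; rewrite keys_label nodes_rpath_on mem_iota; lia.
Qed.

Lemma nodes_start_tree c n : c + 3 <= n -> nodes (start_tree c n) = n.
Proof. by move=> cn; rewrite /= nodes_lpath_on nodes_rpath_on /=; lia. Qed.

Lemma nodes_end_tree c n : c + 2 <= n -> nodes (end_tree c n) = n.
Proof. by move=> cn; rewrite /= nodes_lpath_on nodes_rpath_on /=; lia. Qed.

Section LabelledEnds.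
Variables c n : nat.
Hypothesis cn : c + 4 <= n.

Lemma label_start_tree : label (start_tree c n) 1 =
  LNode (LNode (LNode (label (lpath c) 1) c.+1 (label (rpath (n - 3 - c)) c.+2)) n.-1 LLeaf)
    n LLeaf.
Proof.
rewrite /= nodes_lpath_on nodes_rpath_on !addn0 add1n.
by congr (LNode (LNode _ _ _) _ _); lia.
Qed.

Lemma label_end_tree : label (end_tree c n) 1 =
  LNode (LNode (label (lpath c) 1) c.+1 (label (rpath (n - 2 - c)) c.+2)) n LLeaf.
Proof.
rewrite /= nodes_lpath_on nodes_rpath_on !addn0 add1n.
by congr (LNode _ _ _); lia.
Qed.

Lemma arm_start_tree : arm (label (start_tree c n) 1) = [:: n].
Proof. by rewrite label_start_tree. Qed.

Lemma arm_end_tree : arm (label (end_tree c n) 1) = [:: n].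
Proof. by rewrite label_end_tree. Qed.

Lemma anc_start_tree x : c < x <= n - 3 -> anc (label (start_tree c n) 1) x (n - 2).
Proof.
move=> cx; rewrite label_start_tree; do 2!apply: anc_nodeL.
case: (ltnP c.+1 x) => [cx'|xc].
  by apply: anc_nodeR; apply: anc_label_rpath; lia.
have -> : x = c.+1 by lia.
apply: anc_node_root; rewrite !keys_label mem_cat nodes_rpath_on.
by apply/orP; right; rewrite mem_iota; lia.
Qed.

Lemma anc_start_tree_top : anc (label (start_tree c n) 1) n.-1 (n - 2).
Proof.
rewrite label_start_tree; apply: anc_nodeL; apply: anc_node_root.
rewrite /= cats0 mem_cat in_cons !keys_label !mem_iota nodes_rpath_on addn0.
by apply/orP; right; apply/orP; right; lia.
Qed.

Lemma anc_end_tree x : c < x <= n - 2 -> anc (label (end_tree c n) 1) x n.-1.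
Proof.
move=> cx; rewrite label_end_tree; apply: anc_nodeL.
case: (ltnP c.+1 x) => [cx'|xc].
  by apply: anc_nodeR; apply: anc_label_rpath; lia.
have -> : x = c.+1 by lia.
apply: anc_node_root; rewrite !keys_label mem_cat nodes_rpath_on.
by apply/orP; right; rewrite mem_iota; lia.
Qed.

Lemma anc_end_tree_top d : ~~ anc (label (end_tree c n) 1) n.-1 d.
Proof.
rewrite label_end_tree /= orbF; apply/negP.
case/orP=> [/andP[/eqP]|/or3P[/andP[/eqP]|/anc_keys|h]]; try lia.
- rewrite keys_label mem_iota nodes_lpath_on addn0; lia.
- have := anc_label_rpath_lt h; move/anc_keys: h.
  by rewrite keys_label !mem_iota nodes_rpath_on addn0 => /andP[_ /andP[_]]; lia.
Qed.

End LabelledEnds.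

Lemma at_arm_rpath_on k j g u :
  at_arm (k + j) g (rpath_on k u) = omap (rpath_on k) (at_arm j g u).
Proof. by elim: k => [|k IH] /=; [case: (at_arm j g u) | rewrite IH; case: (at_arm j g u)]. Qed.

Lemma at_arm_cherry k g : g (Node Leaf Leaf) = None -> at_arm k g (Node Leaf Leaf) = None.
Proof. by case: k => [|[|k]]. Qed.

Lemma arm_label_rpath_on k u o : arm (label (rpath_on k u) o) = iota o k ++ arm (label u (o + k)).
Proof. by elim: k o => [|k IH] o /=; rewrite ?addn0 // IH addnS. Qed.

Section Chain.
Variables c n : nat.
Hypothesis cn : c + 4 <= n.

(* Root rotations walk along this chain, and at every level above c its trees have only
   leaves and cherries; so a path from [start_tree] reaches [chain_tree c.+2], whose arm
   carries 1..c+1, before it can leave the chain. *)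
Definition chain_tree i :=
  let W := Node (rpath (n - 3 - c)) (Node Leaf Leaf) in
  match i with
  | 0 => start_tree c n
  | 1 => Node (Node (lpath c) (rpath (n - 3 - c))) (Node Leaf Leaf)
  | j.+2 => Node (lpath (c - j)) (rpath_on j W)
  end.

Lemma chain_rotR i : i <= c.+1 -> at_arm 0 rotR (chain_tree i) = Some (chain_tree i.+1).
Proof.
case: i => [|[|j]] ci //=; first by rewrite subn0.
by have -> : c - j = (c - j.+1).+1 by lia.
Qed.

Lemma chain_rotL i : i <= c.+1 ->
  at_arm 0 rotL (chain_tree i) = if i is i'.+1 then Some (chain_tree i') else None.
Proof.
case: i => [|[|[|j]]] ci //=; first by rewrite subn0.
by have -> : c - j = (c - j.+1).+1 by lia.
Qed.

Lemma chain_at_arm_high i k g : i <= c.+1 -> c < k -> g (Node Leaf Leaf) = None ->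
  at_arm k g (chain_tree i) = None.
Proof.
case: k => [//|k] ci ck g0; case: i ci => [|[|j]] ci /=.
- by case: k ck.
- by rewrite at_arm_cherry.
- have -> : k = j + (k - j.+1).+1 by lia.
  by rewrite at_arm_rpath_on /= at_arm_cherry.
Qed.

Lemma end_tree_notin_chain i : i <= c.+1 -> end_tree c n <> chain_tree i.
Proof.
case: i => [|[|j]] ci //=; last by case: j ci.
by rewrite /end_tree /start_tree => -[]; have -> : n - 2 - c = (n - 3 - c).+1 by lia.
Qed.

Lemma arm_chain_last x : 0 < x <= c.+1 -> x \in arm (label (chain_tree c.+2) 1).
Proof.
have -> : chain_tree c.+2 = rpath_on c.+1 (Node (rpath (n - 3 - c)) (Node Leaf Leaf)).
  by rewrite /= subnn.
by move=> cx; rewrite arm_label_rpath_on mem_cat mem_iota; apply/orP; left; lia.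
Qed.

Lemma path_through_chain_end S T (f : nat -> tree) :
  (forall k, k \in S -> k = 0 \/ c < k) ->
  f 0 = start_tree c n -> f T = end_tree c n ->
  (forall j, j < T -> rra_step S (f j) (f j.+1)) ->
  exists2 j, j <= T & f j = chain_tree c.+2.
Proof.
move=> hS f0 fT fs.
suff: forall j, j <= T ->
    (exists2 i, i <= j & f i = chain_tree c.+2) \/ (exists2 i, i <= c.+1 & f j = chain_tree i).
  case/(_ T (leqnn T)) => [[i iT fi]|[i ci]]; first by exists i.
  by rewrite fT => /end_tree_notin_chain; case/(_ ci).
elim=> [|j IH] jT; first by right; exists 0.
case: (IH (ltnW jT)) => [[i ij fi]|[i ci fj]]; first by left; exists i => //; lia.
case: (fs j jT) => k /hS [->|ck] []; rewrite fj.
- rewrite chain_rotR // => -[fj1].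
  case: (ltnP i c.+1) => [ic|ci']; first by right; exists i.+1; rewrite -?fj1.
  have ei : i = c.+1 by lia.
  by left; exists j.+1; rewrite // -fj1 ei.
- rewrite chain_rotL //; case: i ci fj => [//|i] ci _ [<-].
  by right; exists i => //; lia.
- by rewrite chain_at_arm_high.
- by rewrite chain_at_arm_high.
Qed.

End Chain.

Section Connectivity.
Variable S : seq nat.

Lemma rra_defined_refl t : rra_defined S t t.
Proof. by exists 0. Qed.

Lemma rra_reach_cat m1 m2 a b c :
  rra_reach S m1 a b -> rra_reach S m2 b c -> rra_reach S (m1 + m2) a c.
Proof.
elim: m1 a => [|m1 IH] a /=; first by move=> ->.
by case=> t [ab bc] cd; exists t; split; last exact: IH bc cd.
Qed.

Lemma rra_reach_path m t1 t2 : rra_reach S m t1 t2 -> exists f : nat -> tree,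
  [/\ f 0 = t1, f m = t2 & forall j, j < m -> rra_step S (f j) (f j.+1)].
Proof.
elim: m t1 => [|m IH] t1 /=; first by move=> ->; exists (fun=> t2).
case=> t [st /IH [f [f0 fm f_step]]].
exists (fun j => if j is j'.+1 then f j' else t1); split=> // -[|j] /= jm; first by rewrite f0.
exact: f_step.
Qed.

Lemma rra_defined_trans a b c : rra_defined S a b -> rra_defined S b c -> rra_defined S a c.
Proof. by case=> m1 ab [m2 bc]; exists (m1 + m2); apply: rra_reach_cat ab bc. Qed.

Lemma rra_defined_step a b : rra_step S a b -> rra_defined S a b.
Proof. by move=> ab; exists 1, b. Qed.

Lemma rra_defined_sym a b : rra_defined S a b -> rra_defined S b a.
Proof.
case=> m; elim: m a => [|m IH] a /=; first by move=> ->; apply: rra_defined_refl.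
case=> t [at' tb]; apply: rra_defined_trans (IH _ tb) _.
exact/rra_defined_step/rra_step_sym.
Qed.

Lemma rra_defined_rotR k t t' : k \in S -> at_arm k rotR t = Some t' -> rra_defined S t t'.
Proof. by move=> kS e; apply: rra_defined_step; exists k => //; left. Qed.

Lemma rra_defined_rpath_on k u u' : k \in S -> at_arm 0 rotR u = Some u' ->
  rra_defined S (rpath_on k u) (rpath_on k u').
Proof.
move=> kS e; apply: (rra_defined_rotR kS).
by have := at_arm_rpath_on k 0 rotR u; rewrite addn0 e.
Qed.

Hypothesis S0 : 0 \in S.

Lemma rra_defined_root_rotR a b v : rra_defined S (Node (Node a b) v) (Node a (Node b v)).
Proof. exact: (rra_defined_rotR S0). Qed.

(* Left rotation at the root, rotation at level k+1, right rotation at the root. *)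
Lemma rra_defined_shift k t t' : k.+1 \in S -> at_arm k.+2 rotR t = Some t' ->
  rra_defined S t t'.
Proof.
move=> kS; case: t => [|a [|b w]] //=; case e: (at_arm k rotR w) => [w'|] //= [<-].
apply: rra_defined_trans (rra_defined_sym (rra_defined_root_rotR a b w)) _.
apply: rra_defined_trans (rra_defined_root_rotR a b w').
by apply: (rra_defined_rotR kS) => /=; rewrite e.
Qed.

Lemma rra_defined_lpath k j v : k \in S ->
  rra_defined S (rpath_on k (Node (lpath j) v)) (rpath_on (k + j).+1 v).
Proof.
move=> kS; elim: j v => [|j IH] v; first by rewrite addn0 rpath_onSr; apply: rra_defined_refl.
rewrite addnS rpath_onSr.
by apply: rra_defined_trans (IH (Node Leaf v)); apply: rra_defined_rpath_on.
Qed.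

Variable p : nat.
Hypotheses (Sp : p \in S) (p_gt0 : 0 < p).

Lemma rra_defined_peel j X u :
  rra_defined S (rpath_on p (Node X (Node (rpath j) u)))
                (rpath_on p (Node (lpath_on j X) (Node Leaf u))).
Proof.
elim: j X => [|j IH] X; first exact: rra_defined_refl.
have lower_leaf : rra_defined S (rpath_on p (Node X (Node (rpath j.+1) u)))
                                (rpath_on p (Node X (Node Leaf (Node (rpath j) u)))).
  by apply: (@rra_defined_shift p.-1); rewrite prednK // -[p.+1]addn1 at_arm_rpath_on.
have lift_left : rra_defined S (rpath_on p (Node X (Node Leaf (Node (rpath j) u))))
                               (rpath_on p (Node (Node X Leaf) (Node (rpath j) u))).
  exact/rra_defined_sym/rra_defined_rpath_on.
by rewrite lpath_onSr; apply: rra_defined_trans lower_leaf (rra_defined_trans lift_left (IH _)).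
Qed.

Lemma rra_defined_rpath j u :
  rra_defined S (rpath_on p (Node (rpath j) u)) (rpath_on (p + j).+1 u).
Proof.
case: j => [|j]; first by rewrite addn0 rpath_onSr; apply: rra_defined_refl.
apply: rra_defined_trans (_ : rra_defined S _ (rpath_on p (Node Leaf (Node (rpath j) u)))) _.
  exact: rra_defined_rpath_on.
apply: rra_defined_trans (rra_defined_peel j Leaf u) _.
by rewrite addnS rpath_onSr; apply: rra_defined_lpath.
Qed.

End Connectivity.

Lemma rpath_on_rpath a b : rpath_on a (rpath b) = rpath (a + b).
Proof. by rewrite /rpath_on iterD. Qed.

Lemma start_end_connected S c n : 0 \in S -> c.+1 \in S -> c + 4 <= n ->
  rra_defined S (start_tree c n) (end_tree c n).
Proof.
move=> S0 Sc cn.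
have start_rpath : rra_defined S (start_tree c n) (rpath n).
  apply: rra_defined_trans (rra_defined_root_rotR S0 _ _ _) _.
  apply: rra_defined_trans (rra_defined_root_rotR S0 _ _ _) _.
  apply: rra_defined_trans (rra_defined_lpath c _ S0) _.
  apply: rra_defined_trans (rra_defined_rpath S0 Sc (ltn0Sn c) _ _) _.
  rewrite (_ : Node Leaf Leaf = rpath 1) // rpath_on_rpath.
  have -> : (c.+1 + (n - 3 - c)).+1 + 1 = n by lia.
  exact: rra_defined_refl.
have end_rpath : rra_defined S (end_tree c n) (rpath n).
  apply: rra_defined_trans (rra_defined_root_rotR S0 _ _ _) _.
  apply: rra_defined_trans (rra_defined_lpath c _ S0) _.
  apply: rra_defined_trans (rra_defined_rpath S0 Sc (ltn0Sn c) _ _) _.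
  have -> : (c.+1 + (n - 2 - c)).+1 = n by lia.
  exact: rra_defined_refl.
exact: rra_defined_trans start_rpath (rra_defined_sym end_rpath).
Qed.

Lemma uniq_cat_cons_inj (T : eqType) (s1 s2 t1 t2 : seq T) x :
  uniq (s1 ++ x :: s2) -> s1 ++ x :: s2 = t1 ++ x :: t2 -> s1 = t1 /\ s2 = t2.
Proof.
move=> us e; have ut := us; rewrite e in ut.
have idx (r1 r2 : seq T) : uniq (r1 ++ x :: r2) -> index x (r1 ++ x :: r2) = size r1.
  by rewrite cat_uniq /= => /and3P[_ /norP[xr1 _] _]; rewrite index_cat (negbTE xr1) /= eqxx addn0.
have st : size s1 = size t1 by rewrite -(idx _ _ us) -(idx _ _ ut) e.
by move/eqP: e; rewrite eqseq_cat // eqseq_cons eqxx /= => /andP[/eqP-> /eqP->].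
Qed.

Lemma count_mem_uniq_le (T : eqType) (s t : seq T) : uniq s -> count (mem t) s <= count (mem s) t.
Proof.
move=> us; rewrite -!size_filter uniq_leq_size ?filter_uniq // => x.
by rewrite !mem_filter andbC.
Qed.

Lemma iota_split_last2 n : 1 < n -> iota 1 n = iota 1 (n - 2) ++ [:: n.-1; n].
Proof. by move=> n1; rewrite -[n in iota 1 n](subnK n1) iotaD /=; congr (_ ++ [:: _; _]); lia. Qed.

Lemma last_iota m k x0 : last x0 (iota m k.+1) = m + k.
Proof. by rewrite -addn1 iotaD last_cat. Qed.

Lemma sum_affine_count (T : Type) (s : seq T) (a : pred T) k l :
  \sum_(x <- s) (k + l * a x) = k * size s + l * count a s.
Proof. by elim: s => [|x s IH]; rewrite ?big_nil ?big_cons ?muln0 //= IH; lia. Qed.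

Section LowerBound.
Variables (S : seq nat) (c m n T : nat) (f : nat -> tree).
Hypothesis S_levels : forall k, k \in S -> k = 0 \/ c < k <= m.
Hypotheses (cm : c < m) (mn : m + 4 < n).
Hypotheses (f0 : f 0 = start_tree c n) (fT : f T = end_tree c n).
Hypothesis f_step : forall j, j < T -> rra_step S (f j) (f j.+1).

Let u j := label (f j) 1.
Let cn : c + 4 <= n. Proof. lia. Qed.

Lemma lstep_along_path j : j < T -> exists2 k, k \in S & lstep k (u j) (u j.+1).
Proof. by move/f_step/(rra_step_lstep 1). Qed.

Lemma keys_along_path j : j <= T -> keys (u j) = iota 1 n.
Proof.
elim: j => [|j IH] jT.
  by rewrite /u f0 keys_label nodes_start_tree //; lia.
by case: (lstep_along_path jT) => k _ /lstep_keys ->; apply: IH; lia.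
Qed.

Lemma anc_lost_on_arm a b p d : a <= b -> b <= T -> anc (u a) p d -> ~~ anc (u b) p d ->
  exists j, a <= j < b /\ p \in arm (u j).
Proof.
move=> ab bT Pa Pb; have [t [/andP[a_t t_b] Pt after]] :=
  @ex_last_before (fun j => anc (u j) p d) _ _ ab Pa Pb.
have Pt1 : ~~ anc (u t.+1) p d by apply: after; rewrite ltnSn t_b.
exists t; rewrite a_t t_b; split=> //.
have [k _ st] := lstep_along_path (leq_trans t_b bT).
exact: lstep_anc_lost st Pt Pt1.
Qed.

Lemma anc_gained_on_arm a b p d : a <= b -> b <= T -> ~~ anc (u a) p d -> anc (u b) p d ->
  exists j, a < j <= b /\ p \in arm (u j).
Proof.
move=> ab bT Pa Pb; have [t [/andP[a_t t_b] Pt after]] :=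
  @ex_last_before (fun j => ~~ anc (u j) p d) _ _ ab Pa (introT negPn Pb).
have Pt1 : anc (u t.+1) p d by apply/negPn/after; rewrite ltnSn t_b.
exists t.+1; rewrite ltnS a_t t_b; split=> //.
have [k _ st] := lstep_along_path (leq_trans t_b bT).
exact: lstep_anc_gained st Pt Pt1.
Qed.

Lemma arm_path_ends x : x < n -> (x \in arm (u 0)) = false /\ (x \in arm (u T)) = false.
Proof.
by move=> xn; rewrite /u f0 fT arm_start_tree // arm_end_tree // !inE; split; apply/eqP; lia.
Qed.

Lemma ex_last_arm_visit : exists t, [/\ t < T, n.-1 \in arm (u t) &
  forall j, t < j <= T -> n.-1 \notin arm (u j)].
Proof.
have anc0 : anc (u 0) n.-1 (n - 2) by rewrite /u f0 anc_start_tree_top.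
have ancT : ~~ anc (u T) n.-1 (n - 2) by rewrite /u fT anc_end_tree_top.
have [j0 [/andP[_ j0T] top_j0]] := anc_lost_on_arm (leq0n T) (leqnn T) anc0 ancT.
have top_T : n.-1 \notin arm (u T) by rewrite (arm_path_ends _).2 //; lia.
have [t [/andP[_ tT] top_t after]] :=
  @ex_last_before (fun j => n.-1 \in arm (u j)) j0 T (ltnW j0T) top_j0 top_T.
by exists t.
Qed.

(* The left subtree of n-1 is then empty, as n-1 never returns to the arm to lose those
   descendants; so n-2 is the arm node just above n-1. *)
Lemma arm_at_last_visit t : t < T -> n.-1 \in arm (u t) ->
  (forall j, t < j <= T -> n.-1 \notin arm (u j)) ->
  n - 2 \in arm (u t) /\ count (mem (arm (u t))) (iota 1 n.-1) <= m.+1.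
Proof.
move=> tT top_t after; have n1 : 1 < n by lia.
have [k kS st] := lstep_along_path tT.
have top_t1 : n.-1 \notin arm (u t.+1) by apply: after; rewrite ltnSn tT.
have [cc [A [B [y [C [sk ut ut1]]]]]] := lstep_arm_exit st top_t top_t1.
have A0 : A = LLeaf.
  case: A ut ut1 => [//|A1 a A2] _ ut1.
  have anc1 : anc (u t.+1) n.-1 a.
    by rewrite ut1; apply/anc_plug/anc_nodeL/anc_node_root; rewrite /= !mem_cat in_cons eqxx orbT.
  have ancT : ~~ anc (u T) n.-1 a by rewrite /u fT anc_end_tree_top.
  have [j [/andP[tj jT] top_j]] := anc_lost_on_arm tT (leqnn T) anc1 ancT.
  by have := after j; rewrite tj (ltnW jT) top_j => /(_ isT).
have keys_t : ctx_keys cc ++ n.-1 :: (keys B ++ y :: keys C) = iota 1 (n - 2) ++ n.-1 :: [:: n].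
  by rewrite -(iota_split_last2 n1) -(keys_along_path (ltnW tT)) ut keys_plug A0.
have uniq_t : uniq (ctx_keys cc ++ n.-1 :: (keys B ++ y :: keys C)).
  by rewrite keys_t -(iota_split_last2 n1) iota_uniq.
have [ctx_iota rest] := uniq_cat_cons_inj uniq_t keys_t.
have [ey C0] : y = n /\ keys C = [::].
  by case: (keys B) rest => [|b [|b' bs]] //= [-> ->].
have armC : arm C = [::].
  by case: (arm C) (@arm_keys C) => // a s /(_ a (mem_head _ _)); rewrite C0.
have arm_t : arm (u t) = map snd cc ++ [:: n.-1; n] by rewrite ut arm_plug /= armC ey.
split.
- have last_ctx : last 0 (ctx_keys cc) = n - 2.
    by rewrite ctx_iota (_ : n - 2 = (n - 3).+1) ?last_iota //; lia.
  rewrite arm_t mem_cat -last_ctx mem_last_ctx_keys // ctx_iota size_iota; lia.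
have k_le_m : k <= m by case: (S_levels kS) => [->|/andP[_]].
apply: leq_trans (count_mem_uniq_le _ (iota_uniq _ _)) _.
rewrite arm_t count_cat /= !mem_iota.
have -> : (0 < n.-1 < 1 + n.-1) = true by apply/andP; split; lia.
have -> : (0 < n < 1 + n.-1) = false by apply/negbTE; rewrite negb_and; apply/orP; right; lia.
by have := count_size (mem (iota 1 n.-1)) (map snd cc); rewrite size_map sk /=; lia.
Qed.

Let visits x j := x \in arm (u j).

Lemma switches_ge2 x j : x < n -> j <= T -> visits x j -> 2 <= switches (visits x) 0 T.
Proof.
move=> xn jT xj; have [arm0 armT] := arm_path_ends xn.
apply: (@switches_alternating _ 0 [:: j; T]) => /=; first by rewrite jT.
by rewrite xj /visits arm0 armT.
Qed.

Lemma small_label_visits_arm x : 0 < x <= c -> exists2 j, j <= T & visits x j.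
Proof.
move=> xc.
have S_chain k : k \in S -> k = 0 \/ c < k by case/S_levels => [->|/andP[ck _]]; [left|right].
have [j jT fj] := path_through_chain_end cn S_chain f0 fT f_step.
by exists j; rewrite // /visits /u fj arm_chain_last //; lia.
Qed.

Lemma switches_ge4 x t : c < x < n -> t < T -> n.-1 \in arm (u t) -> n - 2 \in arm (u t) ->
  ~~ visits x t -> 4 <= switches (visits x) 0 T.
Proof.
move=> /andP[cx xn] tT top_t sub_t xt; have [arm0 armT] := arm_path_ends xn.
have x_le : x <= n - 3.
  have : x != n.-1 by apply: contraNneq xt => ->.
  have : x != n - 2 by apply: contraNneq xt => ->.
  move=> /eqP ? /eqP ?; lia.
have uniq_t : uniq (keys (u t)) by rewrite keys_along_path ?iota_uniq // ltnW.
have [j1 [/andP[_ j1t] xj1]] : exists j, 0 <= j < t /\ x \in arm (u j).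
  apply: (@anc_lost_on_arm _ _ _ (n - 2) (leq0n t) (ltnW tT)).
  - by rewrite /u f0 anc_start_tree //; lia.
  - by apply: contraNN xt => /(anc_arm uniq_t sub_t).
have [j2 [/andP[tj2 j2T] xj2]] : exists j, t < j <= T /\ x \in arm (u j).
  apply: (@anc_gained_on_arm _ _ _ n.-1 (ltnW tT) (leqnn T)).
  - by apply: contraNN xt => /(anc_arm uniq_t top_t).
  - by rewrite /u fT anc_end_tree //; lia.
apply: (@switches_alternating _ 0 [:: j1; t; j2; T]) => /=.
  by rewrite (ltnW j1t) (ltnW tj2) j2T.
by rewrite (negbTE xt) /visits arm0 armT xj1 xj2.
Qed.

Lemma path_length_lower_bound : 4 * n - 4 * m - 4 <= T.
Proof.
have [t [tT top_t after]] := ex_last_arm_visit.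
have [sub_t count_t] := arm_at_last_visit tT top_t after.
pose late x := (c < x) && ~~ visits x t.
have per_label x : x \in iota 1 n.-1 -> 2 + 2 * late x <= switches (visits x) 0 T.
  rewrite mem_iota /late => /andP[x0 xn]; have {}xn : x < n by lia.
  case: (leqP x c) => [xc|cx] /=.
    by have [|j jT xj] := @small_label_visits_arm x; [rewrite x0 xc | apply: switches_ge2 xj].
  case xt: (visits x t) => /=; first exact: switches_ge2 (ltnW tT) xt.
  by apply: switches_ge4 (negbT xt); rewrite ?cx.
have total : \sum_(x <- iota 1 n.-1) switches (visits x) 0 T <= T.
  apply: sum_switches_le (iota_uniq _ _) _ => j jT.
  by have [k _ /lstep_arm] := lstep_along_path jT.
have count_late : n.-1 - c - m.+1 <= count late (iota 1 n.-1).
  have count_gt : n.-1 - c <= count (fun x => c < x) (iota 1 n.-1).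
    have -> : iota 1 n.-1 = iota 1 c ++ iota c.+1 (n.-1 - c) by rewrite -iotaD subnKC //; lia.
    rewrite count_cat (@eq_in_count _ _ predT (iota c.+1 _)) ?count_predT ?size_iota ?leq_addl //.
    by move=> x; rewrite mem_iota => /andP[->].
  have split_late : count (fun x => c < x) (iota 1 n.-1)
      <= count late (iota 1 n.-1) + count (mem (arm (u t))) (iota 1 n.-1).
    rewrite -count_predUI (leq_trans _ (leq_addr _ _)) //.
    by apply: sub_count => x /= cx; rewrite /late /visits cx; case: (x \in arm (u t)).
  lia.
have sum_late : \sum_(x <- iota 1 n.-1) (2 + 2 * late x) <= T.
  apply: leq_trans total; rewrite big_seq [leqRHS]big_seq.
  exact: leq_sum per_label.
rewrite sum_affine_count size_iota in sum_late; lia.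
Qed.
End LowerBound.


Theorem theorem3p9 (ls : seq nat) :
  ls != [::] -> 0 < head 0 ls -> sorted ltn ls ->
  forall n : nat, last 0 ls + 4 < n ->
  exists T1 T2 : tree, nodes T1 = n /\ nodes T2 = n /\
    rra_dist_ge (0 :: ls) T1 T2 (4 * n - 4 * last 0 ls - 4).
Proof.
case: ls => [//|p s] _ /= p_gt0 sorted_ps n mn.
have bounds k : k \in p :: s -> p <= k <= last p s.
  by apply: path_leq_bounds; apply: sub_path sorted_ps => x y; apply: ltnW.
have /andP[_ pm] := bounds p (mem_head _ _).
exists (start_tree p.-1 n), (end_tree p.-1 n).
split; first by rewrite nodes_start_tree //; lia.
split; first by rewrite nodes_end_tree //; lia.
split.
  by apply: start_end_connected; rewrite ?prednK ?inE ?eqxx ?orbT //; lia.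
move=> T /rra_reach_path [f [f0 fT f_step]].
apply: (path_length_lower_bound (c := p.-1)) f0 fT f_step; try lia.
move=> k; rewrite inE => /predU1P[->|/bounds]; [by left | right; lia].
Qed.
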